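(* For any $a_0,\dots,a_{2n-1}\in L^1(I)$, whenever the Green's functions involved exist: 1. If $G_P[2T]\le0$ on $J\times J$, then $G_N[T]\le0$ on $I\times I$. 2. If $G_P[2T]\ge0$ on $J\times J$, then $G_N[T]\ge0$ on $I\times I$. 3. If $G_N[2T]\le0$ on $J\times J$, then $G_N[T]\le0$ on $I\times I$. 4. If $G_N[2T]\ge0$ on $J\times J$, then $G_N[T]\ge0$ on $I\times I$. 5. If $G_D[2T]\le0$ on $J\times J$, then $G_{M_2}[T]\le0$ on $I\times I$. 6. If $G_D[2T]\ge0$ on $J\times J$, then $G_{M_2}[T]\ge0$ on $I\times I$.
   Context: Fix $n\ge 1$, $T>0$, $I=[0,T]$, $J=[0,2T]$. $W^{2n,1}(K)$: $u\in C^{2n-1}(K)$ with $u^{(2n-1)}$ absolutely continuous. $Lu=u^{(2n)}+\sum_{k=0}^{2n-1}a_ku^{(k)}$ on $I$. $\widetilde L u=u^{(2n)}+\sum_{k=0}^{n-1}(\hat a_{2k+1}u^{(2k+1)}+\tilde a_{2k}u^{(2k)})$ on $J$, where $\tilde a_{2k}=a_{2k}$, $\hat a_{2k+1}=a_{2k+1}$ on $I$, and $\tilde a_{2k}(t)=a_{2k}(2T-t)$, $\hat a_{2k+1}(t)=-a_{2k+1}(2T-t)$ for $t\in(T,2T]$. An operator $M$ is nonresonant in $X$ if $Mu=0$ a.e., $u\in X$ forces $u\equiv0$; its Green's function $G$ then gives the unique solution $u(t)=\int G(t,s)\sigma(s)ds$ of $Mu=\sigma$, $u\in X$, for every integrable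 $\sigma$. $G_N[T]$, $G_{M_2}[T]$: Green's functions of $L$ on $\{u\in W^{2n,1}(I):u^{(2k+1)}(0)=u^{(2k+1)}(T)=0,\ k=0,\dots,n-1\}$ and on $\{u\in W^{2n,1}(I): u^{(2k)}(0)=u^{(2k+1)}(T)=0,\ k=0,\dots,n-1\}$. $G_P[2T]$, $G_N[2T]$, $G_D[2T]$: Green's functions of $\widetilde L$ on $\{u\in W^{2n,1}(J): u^{(k)}(0)=u^{(k)}(2T),\ k=0,\dots,2n-1\}$, $\{u\in W^{2n,1}(J): u^{(2k+1)}(0)=u^{(2k+1)}(2T)=0,\ k=0,\dots,n-1\}$, $\{u\in W^{2n,1}(J): u^{(2k)}(0)=u^{(2k)}(2T)=0,\ k=0,\dots,n-1\}$. *)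

(* The Lebesgue integral on a compact
   interval is introduced via the McShane (gauge) integral, which is one of
   the standard elementary definitions of the Lebesgue integral on [a,b]. *)
From Stdlib Require Import Reals Lra.
Open Scope R_scope.

Fixpoint sumR (m : nat) (f : nat -> R) : R :=
  match m with O => 0 | S m' => sumR m' f + f m' end.

Definition mcshane_fine (delta : R -> R) (a b : R) (m : nat) (x t : nat -> R) : Prop :=
  x O = a /\ x m = b /\
  (forall i, (i < m)%nat ->
     x i < x (S i) /\ a <= t i <= b /\
     t i - delta (t i) < x i /\ x (S i) < t i + delta (t i)).

Definition riemann_sum (f : R -> R) (m : nat) (x t : nat -> R) : R :=
  sumR m (fun i => f (t i) * (x (S i) - x i)).

Definition has_integral (f : R -> R) (a b v : R) : Prop :=
  a <= b /\
  forall eps, 0 < eps ->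
    exists delta : R -> R, (forall y, 0 < delta y) /\
      forall m x t, mcshane_fine delta a b m x t ->
        Rabs (riemann_sum f m x t - v) < eps.

Definition L1 (a b : R) (f : R -> R) : Prop := exists v, has_integral f a b v.

Definition negligible (N : R -> Prop) : Prop :=
  forall eps, 0 < eps ->
    exists c d : nat -> R,
      (forall y, N y -> exists k, c k < y < d k) /\
      (forall k, c k <= d k) /\
      (forall m, sumR m (fun k => d k - c k) < eps).

Definition ae_on (a b : R) (P : R -> Prop) : Prop :=
  negligible (fun y => a <= y <= b /\ ~ P y).

Definition has_deriv_in (a b : R) (f : R -> R) (t l : R) : Prop :=
  forall eps, 0 < eps -> exists del, 0 < del /\
    forall y, a <= y <= b -> y <> t -> Rabs (y - t) < del ->
      Rabs ((f y - f t) / (y - t) - l) < eps.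

Definition deriv_on (a b : R) (f g : R -> R) : Prop :=
  forall t, a <= t <= b -> has_deriv_in a b f t (g t).

Definition abs_cont (a b : R) (f : R -> R) : Prop :=
  forall eps, 0 < eps -> exists del, 0 < del /\
    forall (m : nat) (c d : nat -> R),
      (forall i, (i < m)%nat -> a <= c i /\ c i <= d i /\ d i <= b) ->
      (forall i j, (i < m)%nat -> (j < m)%nat -> i <> j -> d i <= c j \/ d j <= c i) ->
      sumR m (fun i => d i - c i) < del ->
      sumR m (fun i => Rabs (f (d i) - f (c i))) < eps.

(* D describes an element u = D 0 of W^{N,1}([a,b]) (N >= 1) together with its
   derivatives: D k = u^(k) on [a,b] for k <= N-1 (u in C^{N-1}),
   D (N-1) absolutely continuous, and D N = u^(N) almost everywhere. *)
Definition W_sol (N : nat) (a b : R) (D : nat -> R -> R) : Prop :=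
  (forall k, (k < N - 1)%nat -> deriv_on a b (D k) (D (S k))) /\
  abs_cont a b (D (N - 1)%nat) /\
  ae_on a b (fun t => has_deriv_in a b (D (N - 1)%nat) t (D N t)).

Definition op (N : nat) (c : nat -> R -> R) (D : nat -> R -> R) (t : R) : R :=
  D N t + sumR N (fun k => c k t * D k t).

Definition nonresonant (N : nat) (c : nat -> R -> R) (a b : R)
    (BC : (nat -> R -> R) -> Prop) : Prop :=
  forall D, W_sol N a b D -> BC D -> ae_on a b (fun t => op N c D t = 0) ->
    forall t, a <= t <= b -> D O t = 0.

Definition cont_on_square (a b : R) (G : R -> R -> R) : Prop :=
  forall t s, a <= t <= b -> a <= s <= b ->
    forall eps, 0 < eps -> exists del, 0 < del /\
      forall t' s', a <= t' <= b -> a <= s' <= b ->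
        Rabs (t' - t) < del -> Rabs (s' - s) < del ->
        Rabs (G t' s' - G t s) < eps.

(* G is the Green's function of M on X: M is nonresonant, G is the
   (continuous, order N >= 2) kernel, and for every integrable sigma the
   unique solution of M u = sigma, u in X, is u(t) = int_a^b G(t,s) sigma(s) ds. *)
Definition green_function (N : nat) (c : nat -> R -> R) (a b : R)
    (BC : (nat -> R -> R) -> Prop) (G : R -> R -> R) : Prop :=
  nonresonant N c a b BC /\
  cont_on_square a b G /\
  forall sigma, L1 a b sigma ->
    exists D, W_sol N a b D /\ BC D /\
      ae_on a b (fun t => op N c D t = sigma t) /\
      forall t, a <= t <= b -> has_integral (fun s => G t s * sigma s) a b (D O t).

Definition BC_N (n : nat) (L : R) (D : nat -> R -> R) : Prop :=
  forall k, (k < n)%nat -> D (2 * k + 1)%nat 0 = 0 /\ D (2 * k + 1)%nat L = 0.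
Definition BC_M2 (n : nat) (L : R) (D : nat -> R -> R) : Prop :=
  forall k, (k < n)%nat -> D (2 * k)%nat 0 = 0 /\ D (2 * k + 1)%nat L = 0.
Definition BC_P (n : nat) (L : R) (D : nat -> R -> R) : Prop :=
  forall k, (k < 2 * n)%nat -> D k 0 = D k L.
Definition BC_D (n : nat) (L : R) (D : nat -> R -> R) : Prop :=
  forall k, (k < n)%nat -> D (2 * k)%nat 0 = 0 /\ D (2 * k)%nat L = 0.

(* coefficients of tilde L on [0,2T]: even ones reflected, odd ones
   reflected with a sign change on (T,2T]. *)
Definition ext_coef (T : R) (a : nat -> R -> R) (k : nat) (t : R) : R :=
  if Rle_dec t T then a k t
  else if Nat.odd k then - a k (2 * T - t) else a k (2 * T - t).

Definition nonpos_on (L : R) (G : R -> R -> R) : Prop :=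
  forall t s, 0 <= t <= L -> 0 <= s <= L -> G t s <= 0.
Definition nonneg_on (L : R) (G : R -> R -> R) : Prop :=
  forall t s, 0 <= t <= L -> 0 <= s <= L -> 0 <= G t s.

From Stdlib Require Import Reals Lra Lia Classical.
Open Scope R_scope.

(* The argument is the reflection principle.  Let tilde L be the operator
   whose coefficients are extended to [0,2T] evenly (even order) or oddly
   (odd order) about T.  If u solves tilde L u = sigma with a right-hand side
   symmetric about T and the boundary conditions on [0,2T] are invariant
   under u(t) |-> u(2T - t), then so does the reflected function, hence by
   nonresonance u is symmetric about T: u^(k)(2T - t) = (-1)^k u^(k)(t).
   Its odd derivatives then vanish at T, so its restriction to [0,T] solves
   L u = sigma|_[0,T] with the boundary conditions of the half problem.
   Taking sigma the indicator of [al,be] in [0,T) together with its mirror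
   image, both Green's functions represent the same value u(t0):
     int_0^T G[T](t0,s) 1_[al,be](s) ds = int_0^2T G[2T](t0,s) sigma(s) ds,
   whose sign is that of G[2T]; continuity of G[T] then transfers the sign. *)

Lemma sumR_ext m f g : (forall i, (i < m)%nat -> f i = g i) -> sumR m f = sumR m g.
Proof.
  induction m as [|m IH]; simpl; intros H; auto.
  rewrite IH by (intros; apply H; lia). rewrite H by lia. reflexivity.
Qed.

Lemma sumR_lin m f g p q :
  sumR m (fun i => p * f i + q * g i) = p * sumR m f + q * sumR m g.
Proof. induction m as [|m IH]; simpl; [ring | rewrite IH; ring]. Qed.

Lemma sumR_minus m f g : sumR m (fun i => f i - g i) = sumR m f - sumR m g.
Proof. induction m as [|m IH]; simpl; [ring | rewrite IH; ring]. Qed.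

Lemma sumR_plus m f g : sumR m (fun i => f i + g i) = sumR m f + sumR m g.
Proof. induction m as [|m IH]; simpl; [ring | rewrite IH; ring]. Qed.

Lemma sumR_le m f g : (forall i, (i < m)%nat -> f i <= g i) -> sumR m f <= sumR m g.
Proof.
  induction m as [|m IH]; simpl; intros H; [lra|].
  pose proof (H m ltac:(lia)). pose proof (IH ltac:(intros; apply H; lia)). lra.
Qed.

Lemma sumR_nonneg m f : (forall i, (i < m)%nat -> 0 <= f i) -> 0 <= sumR m f.
Proof.
  intros H. assert (Z : sumR m (fun _ => 0) = 0).
  { clear H. induction m as [|m IH]; simpl; [reflexivity | rewrite IH; ring]. }
  rewrite <- Z. apply sumR_le; auto.
Qed.

Lemma sumR_tel m x : sumR m (fun i => x (S i) - x i) = x m - x O.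
Proof. induction m as [|m IH]; simpl; [ring | rewrite IH; ring]. Qed.

Lemma sumR_mono_len m k h : (forall i, 0 <= h i) -> sumR m h <= sumR (m + k) h.
Proof.
  intros H; induction k as [|k IH].
  - rewrite Nat.add_0_r; lra.
  - rewrite Nat.add_succ_r. simpl. pose proof (H (m + k)%nat). lra.
Qed.

Lemma sumR_double m h :
  sumR (2 * m) h = sumR m (fun j => h (2 * j)%nat) + sumR m (fun j => h (2 * j + 1)%nat).
Proof.
  induction m as [|m IH]; [simpl; ring|].
  replace (2 * S m)%nat with (S (S (2 * m))) by lia.
  change (sumR (S (S (2 * m))) h) with (sumR (2 * m) h + h (2 * m)%nat + h (S (2 * m))).
  change (sumR (S m) (fun j => h (2 * j)%nat))
    with (sumR m (fun j => h (2 * j)%nat) + h (2 * m)%nat).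
  change (sumR (S m) (fun j => h (2 * j + 1)%nat))
    with (sumR m (fun j => h (2 * j + 1)%nat) + h (2 * m + 1)%nat).
  rewrite IH.
  replace (S (2 * m)) with (2 * m + 1)%nat by lia. ring.
Qed.

Lemma fine_mono d d' a b m x t :
  mcshane_fine d a b m x t -> (forall y, d y <= d' y) -> mcshane_fine d' a b m x t.
Proof.
  intros [H0 [H1 H2]] Hd. split; [auto | split; [auto|]]. intros i Hi.
  destruct (H2 i Hi) as [A [B [C E]]]. pose proof (Hd (t i)). repeat split; lra.
Qed.

Lemma riemann_lin f g p q m x t :
  riemann_sum (fun s => p * f s + q * g s) m x t
  = p * riemann_sum f m x t + q * riemann_sum g m x t.
Proof. unfold riemann_sum. rewrite <- sumR_lin. apply sumR_ext. intros; ring. Qed.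

Lemma has_integral_lin f g a b u v p q :
  has_integral f a b u -> has_integral g a b v ->
  has_integral (fun s => p * f s + q * g s) a b (p * u + q * v).
Proof.
  intros [Hab Hf] [_ Hg]; split; auto. intros eps He.
  pose proof (Rabs_pos p); pose proof (Rabs_pos q).
  set (e := eps / (2 * (Rabs p + Rabs q + 1))).
  assert (Heq : e * (2 * (Rabs p + Rabs q + 1)) = eps) by (unfold e; field; lra).
  assert (He' : 0 < e) by (unfold e; apply Rdiv_lt_0_compat; lra).
  destruct (Hf e He') as [d1 [Hd1 H1]]. destruct (Hg e He') as [d2 [Hd2 H2]].
  exists (fun y => Rmin (d1 y) (d2 y)). split; [intros; apply Rmin_glb_lt; auto|].
  intros m x t Hfine.
  pose proof (H1 m x t (fine_mono _ _ _ _ _ _ _ Hfine (fun y => Rmin_l _ _))) as A.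
  pose proof (H2 m x t (fine_mono _ _ _ _ _ _ _ Hfine (fun y => Rmin_r _ _))) as B.
  rewrite riemann_lin.
  replace (p * riemann_sum f m x t + q * riemann_sum g m x t - (p * u + q * v)) with
    (p * (riemann_sum f m x t - u) + q * (riemann_sum g m x t - v)) by ring.
  eapply Rle_lt_trans; [apply Rabs_triang|]. rewrite !Rabs_mult.
  assert (Rabs p * Rabs (riemann_sum f m x t - u) <= Rabs p * e)
    by (apply Rmult_le_compat_l; lra).
  assert (Rabs q * Rabs (riemann_sum g m x t - v) <= Rabs q * e)
    by (apply Rmult_le_compat_l; lra).
  nra.
Qed.

Lemma has_integral_ext f g a b v v' :
  (forall s, a <= s <= b -> f s = g s) -> v = v' ->
  has_integral f a b v -> has_integral g a b v'.
Proof.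
  intros Hfg <- [Hab H]. split; auto. intros eps He.
  destruct (H eps He) as [d [Hd Hs]]. exists d; split; auto. intros m x t F.
  replace (riemann_sum g m x t) with (riemann_sum f m x t); auto.
  unfold riemann_sum. apply sumR_ext. intros i Hi.
  destruct F as [_ [_ F]]. destruct (F i Hi) as [_ [Ht _]]. rewrite Hfg; auto.
Qed.

Lemma has_integral_opp f a b v :
  has_integral f a b v -> has_integral (fun s => - f s) a b (- v).
Proof.
  intros H.
  apply (has_integral_ext (fun s => -1 * f s + 0 * f s) _ a b (-1 * v + 0 * v)).
  - intros; ring.
  - ring.
  - apply has_integral_lin; exact H.
Qed.

Lemma fine_append d a x y m xs ts tg :
  mcshane_fine d a x m xs ts -> x < y -> a <= tg <= y ->
  tg - d tg < x -> y < tg + d tg ->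
  mcshane_fine d a y (S m) (fun i => if Nat.leb i m then xs i else y)
                           (fun i => if Nat.ltb i m then ts i else tg).
Proof.
  intros [H0 [Hm Hi]] Hxy Htg H1 H2. split; [|split].
  - destruct (Nat.leb_spec 0 m); [auto | lia].
  - destruct (Nat.leb_spec (S m) m); [lia | auto].
  - intros i Hi'. destruct (Nat.leb_spec i m); [|lia]. destruct (Nat.ltb_spec i m).
    + destruct (Nat.leb_spec (S i) m); [|lia].
      destruct (Hi i ltac:(lia)) as [A [B C]]. repeat split; lra.
    + assert (i = m) by lia. subst i.
      destruct (Nat.leb_spec (S m) m); [lia|]. rewrite Hm. repeat split; lra.
Qed.

Lemma cousin d a b : (forall y, 0 < d y) -> a <= b -> exists m xs ts, mcshane_fine d a b m xs ts.
Proof.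
  intros Hd Hab.
  set (P := fun x => exists m xs ts, mcshane_fine d a x m xs ts).
  set (E := fun x => a <= x <= b /\ P x).
  assert (Pa : P a).
  { exists O, (fun _ => a), (fun _ => a). split; [reflexivity | split; [reflexivity | intros; lia]]. }
  destruct (completeness E) as [s [Hub Hlub]].
  { exists b; intros x [[_ H] _]; exact H. }
  { exists a; split; [lra | exact Pa]. }
  assert (Has : a <= s) by (apply Hub; split; [lra | exact Pa]).
  assert (Hsb : s <= b) by (apply Hlub; intros x [[_ H] _]; exact H).
  pose proof (Hd s) as Hds.
  assert (Hx : exists x, E x /\ s - d s < x).
  { apply NNPP; intro Hn. assert (s <= s - d s); [|lra].
    apply Hlub. intros x Ex. apply Rnot_lt_le. intro Hlt. apply Hn. exists x; auto. }
  destruct Hx as [x [[[Hax Hxb] Px] Hsx]].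
  assert (Hxs : x <= s) by (apply Hub; repeat split; auto).
  destruct (Req_dec x b) as [Exb|Nxb]; [rewrite <- Exb; exact Px|].
  set (y := Rmin b (s + d s / 2)).
  assert (Hy1 : y <= b) by apply Rmin_l.
  assert (Hy2 : y <= s + d s / 2) by apply Rmin_r.
  assert (Py : P y).
  { destruct Px as [m [xs [ts F]]]. eexists (S m), _, _.
    apply (fine_append d a x y m xs ts s F); unfold y, Rmin in *; destruct Rle_dec; lra. }
  unfold y, Rmin in *; destruct Rle_dec as [Hle|Hgt].
  - exact Py.
  - exfalso. assert (s + d s / 2 <= s) by (apply Hub; split; [lra | exact Py]). lra.
Qed.

(* Positivity of the integral, via a fine partition from Cousin's lemma. *)
Lemma has_integral_nonneg f a b v :
  has_integral f a b v -> (forall s, a <= s <= b -> 0 <= f s) -> 0 <= v.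
Proof.
  intros [Hab H] Hf. apply Rnot_lt_le; intro Hv.
  destruct (H (- v) ltac:(lra)) as [d [Hd Hfi]].
  destruct (cousin d a b Hd Hab) as [m [xs [ts F]]].
  specialize (Hfi m xs ts F). apply Rabs_def2 in Hfi.
  assert (0 <= riemann_sum f m xs ts); [|lra].
  unfold riemann_sum. apply sumR_nonneg. intros i Hi.
  destruct F as [_ [_ F]]. destruct (F i Hi) as [A [B _]].
  apply Rmult_le_pos; [apply Hf; auto | lra].
Qed.

Lemma has_integral_nonpos f a b v :
  has_integral f a b v -> (forall s, a <= s <= b -> f s <= 0) -> v <= 0.
Proof.
  intros H Hf. assert (0 <= - v); [|lra].
  apply (has_integral_nonneg _ a b _ (has_integral_opp _ _ _ _ H)).
  intros s Hs. specialize (Hf s Hs). lra.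
Qed.

Definition ind (al be s : R) : R :=
  if Rle_dec al s then if Rle_dec s be then 1 else 0 else 0.

Lemma ind_01 al be s : 0 <= ind al be s <= 1.
Proof. unfold ind; repeat destruct Rle_dec; lra. Qed.

Ltac clamp := repeat first [ rewrite Rmin_left by lra | rewrite Rmin_right by lra
                           | rewrite Rmax_left by lra | rewrite Rmax_right by lra ].

(* A gauge that is small near the endpoints al and be, so that no cell
   tagged on one side of an endpoint reaches across it. *)
Definition gauge_ind (al be e y : R) : R :=
  if Rlt_dec y al then (al - y) / 2
  else if Rlt_dec al y then
    (if Rlt_dec y be then Rmin (y - al) (be - y) / 2
     else if Rlt_dec be y then (y - be) / 2 else e)
  else e.

Lemma gauge_ind_pos al be e y : 0 < e -> 0 < gauge_ind al be e y.
Proof.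
  intros. unfold gauge_ind. repeat destruct Rlt_dec; try lra.
  apply Rdiv_lt_0_compat; [apply Rmin_glb_lt|]; lra.
Qed.

(* For a cell fine for gauge_ind, the Riemann term of the indicator exceeds
   the exact measure of the cell inside [al,be] by at most the measure of
   the cell inside the e-collars [al-e,al] and [be,be+e]. *)
Lemma ind_term al be e t x0 x1 :
  0 < e -> 4 * e <= be - al -> x0 < x1 ->
  t - gauge_ind al be e t < x0 -> x1 < t + gauge_ind al be e t ->
  0 <= ind al be t * (x1 - x0) - (Rmax al (Rmin x1 be) - Rmax al (Rmin x0 be)) /\
  ind al be t * (x1 - x0) - (Rmax al (Rmin x1 be) - Rmax al (Rmin x0 be)) <=
    (Rmax (al - e) (Rmin x1 al) - Rmax (al - e) (Rmin x0 al))
    + (Rmin (be + e) (Rmax x1 be) - Rmin (be + e) (Rmax x0 be)).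
Proof.
  intros He Hab Hx. unfold gauge_ind, ind.
  pose proof (Rmin_l (t - al) (be - t)). pose proof (Rmin_r (t - al) (be - t)).
  destruct (Rlt_dec t al);
    [|destruct (Rlt_dec al t); [destruct (Rlt_dec t be); [|destruct (Rlt_dec be t)]|]];
  intros H1 H2;
  destruct (Rle_dec al t); destruct (Rle_dec t be); try lra;
  destruct (Rle_dec x0 (al - e)); destruct (Rle_dec x0 al);
  destruct (Rle_dec x0 be); destruct (Rle_dec x0 (be + e));
  destruct (Rle_dec x1 (al - e)); destruct (Rle_dec x1 al);
  destruct (Rle_dec x1 be); destruct (Rle_dec x1 (be + e));
  try lra; clamp; lra.
Qed.

Lemma has_integral_ind a b al be :
  a <= al -> al < be -> be <= b -> has_integral (ind al be) a b (be - al).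
Proof.
  intros Ha Hab Hb. split; [lra|]. intros eps He.
  set (e := Rmin (eps / 4) ((be - al) / 4)).
  assert (He1 : 0 < e) by (apply Rmin_glb_lt; lra).
  assert (He2 : e <= eps / 4) by apply Rmin_l.
  assert (He3 : e <= (be - al) / 4) by apply Rmin_r.
  exists (gauge_ind al be e). split; [intros; apply gauge_ind_pos; lra|].
  intros m x t [H0 [Hm Hi]].
  set (err := fun i => ind al be (t i) * (x (S i) - x i)
                       - (Rmax al (Rmin (x (S i)) be) - Rmax al (Rmin (x i) be))).
  set (collar := fun i => (Rmax (al - e) (Rmin (x (S i)) al) - Rmax (al - e) (Rmin (x i) al))
                 + (Rmin (be + e) (Rmax (x (S i)) be) - Rmin (be + e) (Rmax (x i) be))).
  assert (Hterm : forall i, (i < m)%nat -> 0 <= err i /\ err i <= collar i).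
  { intros i Hi'. destruct (Hi i Hi') as [A [B [C D]]]. apply ind_term; lra. }
  assert (Heq : riemann_sum (ind al be) m x t - (be - al) = sumR m err).
  { unfold err. rewrite sumR_minus, (sumR_tel m (fun y => Rmax al (Rmin (x y) be))), Hm, H0.
    unfold riemann_sum. clamp. ring. }
  assert (L : 0 <= sumR m err) by (apply sumR_nonneg; intros; apply Hterm; auto).
  assert (U : sumR m err <= sumR m collar) by (apply sumR_le; intros; apply Hterm; auto).
  unfold collar in U.
  rewrite sumR_plus, (sumR_tel m (fun y => Rmax (al - e) (Rmin (x y) al))),
    (sumR_tel m (fun y => Rmin (be + e) (Rmax (x y) be))), Hm, H0 in U.
  assert (Rmax (al - e) (Rmin b al) = al) by (clamp; lra).
  assert (al - e <= Rmax (al - e) (Rmin a al)) by apply Rmax_l.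
  assert (Rmin (be + e) (Rmax a be) = be) by (clamp; lra).
  assert (Rmin (be + e) (Rmax b be) <= be + e) by apply Rmin_l.
  rewrite Heq. apply Rabs_def1; lra.
Qed.

Lemma negligible_sub (A B : R -> Prop) :
  (forall y, A y -> B y) -> negligible B -> negligible A.
Proof. intros H HB eps He. destruct (HB eps He) as [c [d [H1 H2]]]. exists c, d. split; auto. Qed.

Lemma negligible_refl (A : R -> Prop) c : negligible A -> negligible (fun y => A (c - y)).
Proof.
  intros HA eps He. destruct (HA eps He) as [cs [ds [H1 [H2 H3]]]].
  exists (fun k => c - ds k), (fun k => c - cs k). split; [|split].
  - intros y Hy. destruct (H1 _ Hy) as [k Hk]. exists k. lra.
  - intros k. specialize (H2 k). lra.
  - intros m. rewrite (sumR_ext m _ (fun k => ds k - cs k)); auto. intros; ring.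
Qed.

Lemma even_double j : Nat.even (2 * j) = true.
Proof. rewrite Nat.even_spec. exists j. reflexivity. Qed.

Lemma even_double_succ j : Nat.even (2 * j + 1) = false.
Proof. rewrite <- Nat.negb_odd, Nat.odd_odd. reflexivity. Qed.

Lemma div2_double_succ j : Nat.div2 (2 * j + 1) = j.
Proof. replace (2 * j + 1)%nat with (S (2 * j)) by lia. apply Nat.div2_succ_double. Qed.

Definition interleave (f g : nat -> R) (k : nat) : R :=
  if Nat.even k then f (Nat.div2 k) else g (Nat.div2 k).

Lemma negligible_union (A B : R -> Prop) :
  negligible A -> negligible B -> negligible (fun y => A y \/ B y).
Proof.
  intros HA HB eps He.
  destruct (HA (eps / 2) ltac:(lra)) as [c1 [d1 [A1 [A2 A3]]]].
  destruct (HB (eps / 2) ltac:(lra)) as [c2 [d2 [B1 [B2 B3]]]].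
  exists (interleave c1 c2), (interleave d1 d2). split; [|split].
  - unfold interleave. intros y [Hy|Hy].
    + destruct (A1 _ Hy) as [k Hk]. exists (2 * k)%nat.
      rewrite even_double, Nat.div2_double. auto.
    + destruct (B1 _ Hy) as [k Hk]. exists (2 * k + 1)%nat.
      rewrite even_double_succ, div2_double_succ. auto.
  - intros k. unfold interleave. destruct Nat.even; auto.
  - intros m. eapply Rle_lt_trans.
    { apply (sumR_mono_len m m). intros i. unfold interleave.
      destruct Nat.even; [specialize (A2 (Nat.div2 i)) | specialize (B2 (Nat.div2 i))]; lra. }
    replace (m + m)%nat with (2 * m)%nat by lia. rewrite sumR_double.
    rewrite (sumR_ext m (fun j => interleave d1 d2 (2 * j) - interleave c1 c2 (2 * j))
               (fun k => d1 k - c1 k))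
      by (intros; unfold interleave; rewrite even_double, Nat.div2_double; reflexivity).
    rewrite (sumR_ext m (fun j => interleave d1 d2 (2 * j + 1) - interleave c1 c2 (2 * j + 1))
               (fun k => d2 k - c2 k))
      by (intros; unfold interleave; rewrite even_double_succ, div2_double_succ; reflexivity).
    specialize (A3 m). specialize (B3 m). lra.
Qed.

Lemma negligible_point p : negligible (fun y => y = p).
Proof.
  intros eps He.
  set (c := fun k => match k with O => p - eps / 4 | _ => 0 end).
  set (d := fun k => match k with O => p + eps / 4 | _ => 0 end).
  exists c, d. split; [|split].
  - intros y ->. exists O. unfold c, d. lra.
  - intros [|k]; unfold c, d; lra.
  - assert (forall m, sumR m (fun k => d k - c k) <= eps / 2); [|intros m; specialize (H m); lra].
    induction m as [|[|m] IH]; simpl in *; unfold c, d in *; lra.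
Qed.

Lemma ae_combine a b (P Q S : R -> Prop) :
  ae_on a b P -> ae_on a b Q ->
  (forall t, a <= t <= b -> P t -> Q t -> S t) -> ae_on a b S.
Proof.
  intros HP HQ H. unfold ae_on in *.
  eapply negligible_sub; [|apply (negligible_union _ _ HP HQ)].
  intros y [Hy HS]. destruct (classic (P y)); [right | left]; auto.
Qed.

Lemma ae_sub a b (P Q : R -> Prop) :
  ae_on a b P -> (forall t, a <= t <= b -> P t -> Q t) -> ae_on a b Q.
Proof. intros HP H. apply (ae_combine a b P P); auto. Qed.

Lemma ae_refl a b c (P : R -> Prop) : c = a + b -> ae_on a b P -> ae_on a b (fun t => P (c - t)).
Proof.
  intros Hc HP. unfold ae_on in *.
  eapply negligible_sub; [|apply (negligible_refl _ c HP)].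
  intros y [Hy HS]. split; auto. lra.
Qed.

Lemma ae_point a b p : ae_on a b (fun t => t <> p).
Proof.
  unfold ae_on. eapply negligible_sub; [|apply (negligible_point p)].
  intros y [_ H]. apply NNPP; auto.
Qed.

Lemma ae_restr a b b' (P : R -> Prop) : b' <= b -> ae_on a b P -> ae_on a b' P.
Proof.
  intros Hb HP. unfold ae_on in *. eapply negligible_sub; [|apply HP].
  intros y [Hy HS]. split; auto. lra.
Qed.

Lemma deriv_restr a b b' f t l : b' <= b -> has_deriv_in a b f t l -> has_deriv_in a b' f t l.
Proof.
  intros Hb H eps He. destruct (H eps He) as [d [Hd H']].
  exists d; split; auto. intros; apply H'; auto; lra.
Qed.

Lemma deriv_minus a b f g t l1 l2 :
  has_deriv_in a b f t l1 -> has_deriv_in a b g t l2 ->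
  has_deriv_in a b (fun y => f y - g y) t (l1 - l2).
Proof.
  intros Hf Hg eps He.
  destruct (Hf (eps / 2) ltac:(lra)) as [d1 [Hd1 H1]].
  destruct (Hg (eps / 2) ltac:(lra)) as [d2 [Hd2 H2]].
  exists (Rmin d1 d2). split; [apply Rmin_glb_lt; auto|]. intros y Hy Hyt Hd.
  pose proof (Rmin_l d1 d2). pose proof (Rmin_r d1 d2).
  specialize (H1 y Hy Hyt ltac:(lra)). specialize (H2 y Hy Hyt ltac:(lra)).
  replace ((f y - g y - (f t - g t)) / (y - t) - (l1 - l2)) with
    (((f y - f t) / (y - t) - l1) - ((g y - g t) / (y - t) - l2))
    by (field; apply Rminus_eq_contra; auto).
  eapply Rle_lt_trans; [apply Rabs_triang|]. rewrite Rabs_Ropp. lra.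
Qed.

Lemma deriv_sign a b f t l s :
  Rabs s = 1 -> has_deriv_in a b f t l -> has_deriv_in a b (fun y => s * f y) t (s * l).
Proof.
  intros Hs Hf eps He. destruct (Hf eps He) as [d [Hd H]].
  exists d; split; auto. intros y Hy Hyt Hd'.
  replace ((s * f y - s * f t) / (y - t) - s * l) with (s * ((f y - f t) / (y - t) - l))
    by (field; apply Rminus_eq_contra; auto).
  rewrite Rabs_mult, Hs, Rmult_1_l. auto.
Qed.

Lemma deriv_refl a b c f t l :
  c = a + b -> has_deriv_in a b f (c - t) l -> has_deriv_in a b (fun y => f (c - y)) t (- l).
Proof.
  intros Hc Hf eps He. destruct (Hf eps He) as [d [Hd H]].
  exists d; split; auto. intros y Hy Hyt Hd'.
  assert (Hyt' : c - y <> c - t) by (intro E; apply Hyt; lra).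
  assert (Hdist : Rabs (c - y - (c - t)) < d)
    by (replace (c - y - (c - t)) with (- (y - t)) by ring; rewrite Rabs_Ropp; auto).
  specialize (H (c - y) ltac:(lra) Hyt' Hdist).
  replace ((f (c - y) - f (c - t)) / (y - t) - - l)
    with (- ((f (c - y) - f (c - t)) / (c - y - (c - t)) - l)).
  - rewrite Rabs_Ropp; auto.
  - field. split; apply Rminus_eq_contra; auto.
Qed.

Lemma deriv_unique a b f g t l1 l2 :
  a < b -> a <= t <= b -> (forall y, a <= y <= b -> f y = g y) ->
  has_deriv_in a b f t l1 -> has_deriv_in a b g t l2 -> l1 = l2.
Proof.
  intros Hab Ht Hfg H1 H2. destruct (Req_dec l1 l2) as [E|E]; auto. exfalso.
  pose proof (Rabs_pos_lt (l1 - l2) (Rminus_eq_contra _ _ E)) as Hp.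
  set (e := Rabs (l1 - l2) / 2).
  destruct (H1 e ltac:(unfold e; lra)) as [d1 [Hd1 K1]].
  destruct (H2 e ltac:(unfold e; lra)) as [d2 [Hd2 K2]].
  set (r := Rmin (Rmin d1 d2) ((b - a) / 2) / 2).
  pose proof (Rmin_l (Rmin d1 d2) ((b - a) / 2)). pose proof (Rmin_r (Rmin d1 d2) ((b - a) / 2)).
  pose proof (Rmin_l d1 d2). pose proof (Rmin_r d1 d2).
  assert (Hr1 : r < d1) by (unfold r; lra).
  assert (Hr2 : r < d2) by (unfold r; lra).
  assert (Hr3 : r <= (b - a) / 4) by (unfold r; lra).
  assert (Hr0 : 0 < r) by (unfold r; apply Rdiv_lt_0_compat; [repeat apply Rmin_glb_lt|]; lra).
  assert (exists y, a <= y <= b /\ y <> t /\ Rabs (y - t) = r) as [y [Hy [Hyt Hyr]]].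
  { destruct (Rle_dec (t + r) b).
    - exists (t + r). split; [lra | split; [lra|]].
      replace (t + r - t) with r by ring. apply Rabs_right; lra.
    - exists (t - r). split; [lra | split; [lra|]].
      replace (t - r - t) with (- r) by ring. rewrite Rabs_Ropp. apply Rabs_right; lra. }
  specialize (K1 y Hy Hyt ltac:(lra)). specialize (K2 y Hy Hyt ltac:(lra)).
  rewrite <- (Hfg y Hy), <- (Hfg t Ht) in K2.
  apply Rabs_def2 in K1. apply Rabs_def2 in K2. unfold e in *.
  revert K1 K2 Hp. unfold Rabs; destruct Rcase_abs; intros; lra.
Qed.

Lemma Rabs_sub_sub A B C D : Rabs ((A - B) - (C - D)) <= Rabs (A - C) + Rabs (B - D).
Proof. unfold Rabs; repeat destruct Rcase_abs; lra. Qed.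

Lemma abs_cont_minus a b f g :
  abs_cont a b f -> abs_cont a b g -> abs_cont a b (fun y => f y - g y).
Proof.
  intros Hf Hg eps He.
  destruct (Hf (eps / 2) ltac:(lra)) as [d1 [Hd1 H1]].
  destruct (Hg (eps / 2) ltac:(lra)) as [d2 [Hd2 H2]].
  exists (Rmin d1 d2). split; [apply Rmin_glb_lt; auto|]. intros m c d Hi Hdis Hs.
  pose proof (Rmin_l d1 d2). pose proof (Rmin_r d1 d2).
  specialize (H1 m c d Hi Hdis ltac:(lra)). specialize (H2 m c d Hi Hdis ltac:(lra)).
  eapply Rle_lt_trans.
  - apply (sumR_le _ _ (fun i => Rabs (f (d i) - f (c i)) + Rabs (g (d i) - g (c i)))).
    intros; apply Rabs_sub_sub.
  - rewrite sumR_plus. lra.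
Qed.

Lemma abs_cont_sign a b f s : Rabs s = 1 -> abs_cont a b f -> abs_cont a b (fun y => s * f y).
Proof.
  intros Hs Hf eps He. destruct (Hf eps He) as [d [Hd H]].
  exists d; split; auto. intros m c d' Hi Hdis Hsum.
  rewrite (sumR_ext _ _ (fun i => Rabs (f (d' i) - f (c i)))); auto.
  intros i _. replace (s * f (d' i) - s * f (c i)) with (s * (f (d' i) - f (c i))) by ring.
  rewrite Rabs_mult, Hs; ring.
Qed.

Lemma abs_cont_refl a b c f : c = a + b -> abs_cont a b f -> abs_cont a b (fun y => f (c - y)).
Proof.
  intros Hc Hf eps He. destruct (Hf eps He) as [d [Hd H]].
  exists d; split; auto. intros m cs ds Hi Hdis Hsum.
  rewrite (sumR_ext _ _ (fun i => Rabs (f (c - cs i) - f (c - ds i))))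
    by (intros; apply Rabs_minus_sym).
  apply (H m (fun i => c - ds i) (fun i => c - cs i)).
  - intros i Hi'. specialize (Hi i Hi'). lra.
  - intros i j Hi' Hj' Hij. destruct (Hdis i j Hi' Hj' Hij); [right | left]; lra.
  - rewrite (sumR_ext _ _ (fun i => ds i - cs i)); auto. intros; ring.
Qed.

Lemma abs_cont_restr a b b' f : b' <= b -> abs_cont a b f -> abs_cont a b' f.
Proof.
  intros Hb Hf eps He. destruct (Hf eps He) as [d [Hd H]].
  exists d; split; auto. intros m c d' Hi Hdis Hsum.
  apply H; auto. intros i Hi'. specialize (Hi i Hi'). lra.
Qed.

Lemma W_sol_minus N a b D1 D2 :
  W_sol N a b D1 -> W_sol N a b D2 -> W_sol N a b (fun k t => D1 k t - D2 k t).
Proof.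
  intros [A1 [B1 C1]] [A2 [B2 C2]]. split; [|split].
  - intros k Hk t Ht. apply deriv_minus; [apply A1 | apply A2]; auto.
  - apply abs_cont_minus; auto.
  - apply (ae_combine _ _ _ _ _ C1 C2). intros t _ H1 H2. apply deriv_minus; auto.
Qed.

Lemma W_sol_restr N a b b' D : b' <= b -> W_sol N a b D -> W_sol N a b' D.
Proof.
  intros Hb [A [B C]]. split; [|split].
  - intros k Hk t Ht. apply (deriv_restr a b); auto. apply A; auto; lra.
  - apply (abs_cont_restr a b); auto.
  - eapply ae_sub; [apply (ae_restr a b); eauto|]. intros t _ H. apply (deriv_restr a b); auto.
Qed.

(* Reflection of a function together with its derivatives about the midpoint
   c/2: the k-th derivative of u(c - .) is (-1)^k u^(k)(c - .). *)
Definition refl (c : R) (D : nat -> R -> R) : nat -> R -> R :=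
  fun k t => (-1) ^ k * D k (c - t).

Lemma refl_deriv a b c D k t l :
  c = a + b -> has_deriv_in a b (D k) (c - t) l ->
  has_deriv_in a b (refl c D k) t ((-1) ^ S k * l).
Proof.
  intros Hc H. replace ((-1) ^ S k * l) with ((-1) ^ k * - l) by (simpl; ring).
  apply (deriv_sign a b (fun y => D k (c - y))); [apply pow_1_abs|].
  apply (deriv_refl a b c); auto.
Qed.

Lemma W_sol_refl N a b c D :
  (1 <= N)%nat -> c = a + b -> W_sol N a b D -> W_sol N a b (refl c D).
Proof.
  intros HN Hc [A [B C]]. split; [|split].
  - intros k Hk t Ht. apply refl_deriv; auto. apply A; [lia | lra].
  - apply (abs_cont_sign a b (fun y => D (N - 1)%nat (c - y))); [apply pow_1_abs|].
    apply abs_cont_refl; auto.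
  - eapply ae_sub; [apply (ae_refl a b c _ Hc C)|]. intros t Ht H.
    replace N with (S (N - 1)) at 2 by lia. apply refl_deriv; auto.
    replace (S (N - 1)) with N by lia. exact H.
Qed.

Lemma pow_neg1 k : (-1) ^ k = if Nat.odd k then -1 else 1.
Proof.
  destruct (Nat.odd k) eqn:E.
  - apply Nat.odd_spec in E as [j ->]. rewrite pow_add, pow_1_even. ring.
  - rewrite <- Nat.negb_even in E. apply Bool.negb_false_iff, Nat.even_spec in E as [j ->].
    apply pow_1_even.
Qed.

Lemma pow_odd k : (-1) ^ (2 * k + 1) = -1.
Proof. rewrite pow_add, pow_1_even. ring. Qed.

Lemma ext_coef_refl T a k t :
  t <> T -> ext_coef T a k t * (-1) ^ k = ext_coef T a k (2 * T - t).
Proof.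
  intros Ht. unfold ext_coef. rewrite pow_neg1.
  destruct (Rtotal_order t T) as [Hlt|[Heq|Hgt]]; [|contradiction|].
  - destruct (Rle_dec t T); [|lra]. destruct (Rle_dec (2 * T - t) T); [lra|].
    replace (2 * T - (2 * T - t)) with t by ring. destruct (Nat.odd k); ring.
  - destruct (Rle_dec t T); [lra|]. destruct (Rle_dec (2 * T - t) T); [|lra].
    destruct (Nat.odd k); ring.
Qed.

Lemma op_minus N c D1 D2 t :
  op N c (fun k t => D1 k t - D2 k t) t = op N c D1 t - op N c D2 t.
Proof.
  unfold op. rewrite (sumR_ext _ _ (fun k => c k t * D1 k t - c k t * D2 k t)) by (intros; ring).
  rewrite sumR_minus. ring.
Qed.

Lemma op_ext N c1 c2 D t :
  (forall k, (k < N)%nat -> c1 k t = c2 k t) -> op N c1 D t = op N c2 D t.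
Proof. intros H. unfold op. f_equal. apply sumR_ext. intros k Hk. rewrite H; auto. Qed.

Lemma op_refl n T a D t :
  t <> T -> op (2 * n) (ext_coef T a) (refl (2 * T) D) t = op (2 * n) (ext_coef T a) D (2 * T - t).
Proof.
  intros Ht. unfold op, refl. rewrite pow_1_even. f_equal; [ring|].
  apply sumR_ext. intros k _. rewrite <- (ext_coef_refl T a k t Ht). ring.
Qed.

Definition symm (N : nat) (T : R) (D : nat -> R -> R) : Prop :=
  forall k, (k <= N - 1)%nat -> forall t, 0 <= t <= 2 * T -> D k t = (-1) ^ k * D k (2 * T - t).

(* The right-hand side used to probe the Green's functions: the indicator
   of [al,be] plus its mirror image about T. *)
Definition mirror_ind (T al be s : R) : R := ind al be s + ind (2 * T - be) (2 * T - al) s.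

Lemma mirror_ind_symm T al be t : mirror_ind T al be (2 * T - t) = mirror_ind T al be t.
Proof. unfold mirror_ind, ind. repeat destruct Rle_dec; lra. Qed.

Lemma mirror_ind_L1 T al be : 0 <= al -> al < be -> be <= T -> L1 0 (2 * T) (mirror_ind T al be).
Proof.
  intros. exists (1 * (be - al) + 1 * ((2 * T - al) - (2 * T - be))).
  apply (has_integral_ext (fun s => 1 * ind al be s + 1 * ind (2 * T - be) (2 * T - al) s)
           _ 0 (2 * T) (1 * (be - al) + 1 * ((2 * T - al) - (2 * T - be)))).
  - intros s _. unfold mirror_ind. ring.
  - reflexivity.
  - apply has_integral_lin; apply has_integral_ind; lra.
Qed.

(* Boundary conditions on [0,2T] (BC2) and on [0,T] (BC1) that fit the
   reflection principle: both are linear, BC2 is reflection invariant, and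
   symmetric functions satisfying BC2 satisfy BC1. *)
Record reflection_pair (n : nat) (T : R) (BC2 BC1 : (nat -> R -> R) -> Prop) : Prop := {
  bc2_sub : forall D1 D2, BC2 D1 -> BC2 D2 -> BC2 (fun k t => D1 k t - D2 k t);
  bc2_refl : forall D, BC2 D -> BC2 (refl (2 * T) D);
  bc1_sub : forall D1 D2, BC1 D1 -> BC1 D2 -> BC1 (fun k t => D1 k t - D2 k t);
  bc1_of_symm : forall D, BC2 D -> symm (2 * n) T D -> BC1 D }.

Section ReflectionPrinciple.

Variables (n : nat) (T : R) (a : nat -> R -> R).
Hypotheses (Hn : (1 <= n)%nat) (HT : 0 < T).

Lemma refl_solves D sigma :
  W_sol (2 * n) 0 (2 * T) D ->
  ae_on 0 (2 * T) (fun t => op (2 * n) (ext_coef T a) D t = sigma t) ->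
  (forall t, sigma (2 * T - t) = sigma t) ->
  W_sol (2 * n) 0 (2 * T) (refl (2 * T) D) /\
  ae_on 0 (2 * T) (fun t => op (2 * n) (ext_coef T a) (refl (2 * T) D) t = sigma t).
Proof.
  intros HW Hop Hsym. split.
  - apply W_sol_refl; [lia | ring | exact HW].
  - eapply ae_combine; [apply (ae_refl 0 (2 * T) (2 * T) _ ltac:(ring) Hop) | apply (ae_point 0 (2 * T) T)|].
    intros t _ H Ht. rewrite op_refl by exact Ht. rewrite H. apply Hsym.
Qed.

(* By nonresonance, the solution with symmetric data is itself symmetric;
   equality of the derivatives follows from equality of the functions. *)
Lemma symmetric_solution BC2 D sigma :
  nonresonant (2 * n) (ext_coef T a) 0 (2 * T) BC2 ->
  (forall D1 D2, BC2 D1 -> BC2 D2 -> BC2 (fun k t => D1 k t - D2 k t)) ->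
  (forall D, BC2 D -> BC2 (refl (2 * T) D)) ->
  W_sol (2 * n) 0 (2 * T) D -> BC2 D ->
  ae_on 0 (2 * T) (fun t => op (2 * n) (ext_coef T a) D t = sigma t) ->
  (forall t, sigma (2 * T - t) = sigma t) ->
  symm (2 * n) T D.
Proof.
  intros Hnr Hsub Hrefl HW HBC Hop Hsym.
  destruct (refl_solves D sigma HW Hop Hsym) as [HWr Hopr].
  assert (Hzero : forall t, 0 <= t <= 2 * T -> D 0%nat t - refl (2 * T) D 0%nat t = 0).
  { apply (Hnr (fun k t => D k t - refl (2 * T) D k t)).
    - apply W_sol_minus; auto.
    - apply Hsub; auto.
    - eapply ae_combine; [apply Hop | apply Hopr|].
      intros t _ H1 H2. rewrite op_minus. lra. }
  intros k. induction k as [|k IH]; intros Hk t Ht.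
  - specialize (Hzero t Ht). unfold refl in Hzero. lra.
  - destruct HW as [Hd _]. destruct HWr as [Hdr _].
    apply (deriv_unique 0 (2 * T) (D k) (refl (2 * T) D k) t); try lra.
    + intros y Hy. apply IH; auto; lia.
    + apply Hd; auto; lia.
    + apply Hdr; auto; lia.
Qed.

(* On [0,T] the coefficients of tilde L are those of L. *)
Lemma restricted_solution D sigma :
  W_sol (2 * n) 0 (2 * T) D ->
  ae_on 0 (2 * T) (fun t => op (2 * n) (ext_coef T a) D t = sigma t) ->
  W_sol (2 * n) 0 T D /\ ae_on 0 T (fun t => op (2 * n) a D t = sigma t).
Proof.
  intros HW Hop. split.
  - apply (W_sol_restr _ 0 (2 * T)); auto; lra.
  - eapply ae_sub; [apply (ae_restr 0 (2 * T)); [lra | apply Hop]|].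
    intros t Ht H. rewrite <- H. apply op_ext.
    intros k _. unfold ext_coef. destruct (Rle_dec t T); [reflexivity | lra].
Qed.

Lemma green_values_agree BC2 BC1 G2 G1 :
  reflection_pair n T BC2 BC1 ->
  green_function (2 * n) (ext_coef T a) 0 (2 * T) BC2 G2 ->
  green_function (2 * n) a 0 T BC1 G1 ->
  forall al be t0, 0 <= al -> al < be -> be < T -> 0 <= t0 <= T ->
  exists V, has_integral (fun s => G1 t0 s * ind al be s) 0 T V /\
            has_integral (fun s => G2 t0 s * mirror_ind T al be s) 0 (2 * T) V.
Proof.
  intros [Hsub2 Hrefl2 Hsub1 Hsymm1] [Hnr2 [_ Hex2]] [Hnr1 [_ Hex1]] al be t0 Hal Hab Hbe Ht0.
  destruct (Hex2 (mirror_ind T al be) (mirror_ind_L1 T al be Hal Hab ltac:(lra)))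
    as [D [HW [HB2 [Hop Hint2]]]].
  assert (Hsymm : symm (2 * n) T D)
    by (apply (symmetric_solution BC2 D (mirror_ind T al be)); auto using mirror_ind_symm).
  destruct (restricted_solution D _ HW Hop) as [HW1 Hop1].
  destruct (Hex1 (ind al be) (ex_intro _ _ (has_integral_ind 0 T al be Hal Hab ltac:(lra))))
    as [D1 [HWD1 [HB1 [HopD1 Hint1]]]].
  assert (Hsame : D1 0%nat t0 - D 0%nat t0 = 0).
  { apply (Hnr1 (fun k t => D1 k t - D k t)); [apply W_sol_minus; auto | apply Hsub1; auto | | exact Ht0].
    eapply ae_combine; [apply HopD1 | apply Hop1|].
    intros t Ht H1 H2. rewrite op_minus, H1, H2.
    unfold mirror_ind, ind. repeat destruct Rle_dec; lra. }
  exists (D 0%nat t0). split.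
  - replace (D 0%nat t0) with (D1 0%nat t0) by lra. apply Hint1; auto.
  - apply Hint2. lra.
Qed.

End ReflectionPrinciple.

(* If f is continuous at s0 and integrates to a nonpositive value over every
   subinterval [al,be] of [0,b), then f(s0) <= 0: otherwise f > f(s0)/2 on a
   small subinterval near s0, whose integral would then be positive. *)
Lemma nonpos_of_interval_integrals f b s0 :
  0 < b -> 0 <= s0 <= b ->
  (forall eps, 0 < eps -> exists del, 0 < del /\
     forall s, 0 <= s <= b -> Rabs (s - s0) < del -> Rabs (f s - f s0) < eps) ->
  (forall al be, 0 <= al -> al < be -> be < b ->
     exists V, has_integral (fun s => f s * ind al be s) 0 b V /\ V <= 0) ->
  f s0 <= 0.
Proof.
  intros Hb Hs0 Hcont Hint. apply Rnot_lt_le; intro Hpos.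
  set (c := f s0 / 2).
  destruct (Hcont c ltac:(unfold c; lra)) as [del [Hdel Hnear]].
  set (h := Rmin del b / 2).
  assert (Hh1 : h <= del / 2) by (unfold h; pose proof (Rmin_l del b); lra).
  assert (Hh2 : h <= b / 2) by (unfold h; pose proof (Rmin_r del b); lra).
  assert (Hh0 : 0 < h) by (unfold h; apply Rdiv_lt_0_compat; [apply Rmin_glb_lt|]; lra).
  assert (exists al be, 0 <= al /\ al < be /\ be < b /\
                        forall s, al <= s <= be -> Rabs (s - s0) < del)
    as [al [be [Hal [Hab [Hbe Hclose]]]]].
  { destruct (Rle_dec (s0 - h) 0).
    - exists 0, (h / 2). repeat split; try lra. intros s Hs. apply Rabs_def1; lra.
    - exists (s0 - h), (s0 - h / 2). repeat split; try lra. intros s Hs. apply Rabs_def1; lra. }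
  destruct (Hint al be Hal Hab Hbe) as [V [HV HVle]].
  assert (Hge : 0 <= 1 * V + (- c) * (be - al)).
  { eapply has_integral_nonneg;
      [apply (has_integral_lin _ _ _ _ _ _ 1 (- c) HV (has_integral_ind 0 b al be Hal Hab ltac:(lra)))|].
    intros s Hs. unfold ind. destruct (Rle_dec al s); [destruct (Rle_dec s be)|]; try lra.
    assert (Hs' : Rabs (f s - f s0) < c) by (apply Hnear; [lra | apply Hclose; lra]).
    apply Rabs_def2 in Hs'. unfold c in *. lra. }
  assert (0 < c * (be - al)) by (apply Rmult_lt_0_compat; unfold c; lra). lra.
Qed.

Lemma nonneg_of_interval_integrals f b s0 :
  0 < b -> 0 <= s0 <= b ->
  (forall eps, 0 < eps -> exists del, 0 < del /\
     forall s, 0 <= s <= b -> Rabs (s - s0) < del -> Rabs (f s - f s0) < eps) ->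
  (forall al be, 0 <= al -> al < be -> be < b ->
     exists V, has_integral (fun s => f s * ind al be s) 0 b V /\ 0 <= V) ->
  0 <= f s0.
Proof.
  intros Hb Hs0 Hcont Hint.
  assert (- f s0 <= 0); [|lra].
  apply (nonpos_of_interval_integrals (fun s => - f s) b s0 Hb Hs0).
  - intros eps He. destruct (Hcont eps He) as [del [Hdel H]]. exists del; split; auto.
    intros s Hs Hd. replace (- f s - - f s0) with (- (f s - f s0)) by ring.
    rewrite Rabs_Ropp. auto.
  - intros al be Hal Hab Hbe. destruct (Hint al be Hal Hab Hbe) as [V [HV HVge]].
    exists (- V). split; [|lra].
    apply (has_integral_ext (fun s => - (f s * ind al be s)) _ 0 b (- V)); auto.
    + intros; ring.
    + apply has_integral_opp; exact HV.
Qed.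

Lemma cont_on_square_section b G t0 s0 :
  cont_on_square 0 b G -> 0 <= t0 <= b -> 0 <= s0 <= b ->
  forall eps, 0 < eps -> exists del, 0 < del /\
    forall s, 0 <= s <= b -> Rabs (s - s0) < del -> Rabs (G t0 s - G t0 s0) < eps.
Proof.
  intros HG Ht0 Hs0 eps He. destruct (HG t0 s0 Ht0 Hs0 eps He) as [del [Hdel H]].
  exists del; split; auto. intros s Hs Hd. apply H; auto.
  rewrite Rminus_diag, Rabs_R0. exact Hdel.
Qed.

Lemma sign_transfer n T a BC2 BC1 :
  (1 <= n)%nat -> 0 < T ->
  reflection_pair n T BC2 BC1 ->
  forall G2 G1,
  green_function (2 * n) (ext_coef T a) 0 (2 * T) BC2 G2 ->
  green_function (2 * n) a 0 T BC1 G1 ->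
  (nonpos_on (2 * T) G2 -> nonpos_on T G1) /\ (nonneg_on (2 * T) G2 -> nonneg_on T G1).
Proof.
  intros Hn HT HBC G2 G1 H2 H1.
  pose proof (green_values_agree n T a Hn HT BC2 BC1 G2 G1 HBC H2 H1) as Hagree.
  pose proof (proj1 (proj2 H1)) as Hcont.
  split; intros Hsign t0 s0 Ht0 Hs0.
  - apply (nonpos_of_interval_integrals (G1 t0) T s0 HT Hs0);
      [apply cont_on_square_section; auto|].
    intros al be Hal Hab Hbe. destruct (Hagree al be t0 Hal Hab Hbe Ht0) as [V [HV1 HV2]].
    exists V. split; [exact HV1|]. apply (has_integral_nonpos _ 0 (2 * T) _ HV2).
    intros s Hs. pose proof (ind_01 al be s). pose proof (ind_01 (2 * T - be) (2 * T - al) s).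
    assert (G2 t0 s <= 0) by (apply Hsign; lra). unfold mirror_ind. nra.
  - apply (nonneg_of_interval_integrals (G1 t0) T s0 HT Hs0);
      [apply cont_on_square_section; auto|].
    intros al be Hal Hab Hbe. destruct (Hagree al be t0 Hal Hab Hbe Ht0) as [V [HV1 HV2]].
    exists V. split; [exact HV1|]. apply (has_integral_nonneg _ 0 (2 * T) _ HV2).
    intros s Hs. pose proof (ind_01 al be s). pose proof (ind_01 (2 * T - be) (2 * T - al) s).
    assert (0 <= G2 t0 s) by (apply Hsign; lra). unfold mirror_ind. nra.
Qed.

Lemma refl_endpoints T D k :
  refl (2 * T) D k 0 = (-1) ^ k * D k (2 * T) /\ refl (2 * T) D k (2 * T) = (-1) ^ k * D k 0.
Proof. unfold refl. split; f_equal; f_equal; ring. Qed.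

Lemma symm_odd n T D k :
  0 < T -> (k < n)%nat -> symm (2 * n) T D ->
  D (2 * k + 1)%nat 0 = - D (2 * k + 1)%nat (2 * T) /\ D (2 * k + 1)%nat T = 0.
Proof.
  intros HT Hk Hs.
  pose proof (Hs (2 * k + 1)%nat ltac:(lia) 0 ltac:(lra)) as H0.
  pose proof (Hs (2 * k + 1)%nat ltac:(lia) T ltac:(lra)) as HTT.
  rewrite pow_odd in H0, HTT. replace (2 * T - 0) with (2 * T) in H0 by ring.
  replace (2 * T - T) with T in HTT by ring. split; lra.
Qed.

Lemma reflection_P_N n T : 0 < T -> reflection_pair n T (BC_P n (2 * T)) (BC_N n T).
Proof.
  intros HT. split.
  - intros D1 D2 H1 H2 k Hk. rewrite (H1 k Hk), (H2 k Hk). reflexivity.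
  - intros D H k Hk. destruct (refl_endpoints T D k) as [-> ->]. rewrite (H k Hk). reflexivity.
  - intros D1 D2 H1 H2 k Hk. destruct (H1 k Hk), (H2 k Hk). split; lra.
  - intros D HP Hs k Hk. destruct (symm_odd n T D k HT Hk Hs) as [H0 HTT].
    pose proof (HP (2 * k + 1)%nat ltac:(lia)). split; lra.
Qed.

Lemma reflection_N_N n T : 0 < T -> reflection_pair n T (BC_N n (2 * T)) (BC_N n T).
Proof.
  intros HT. split.
  - intros D1 D2 H1 H2 k Hk. destruct (H1 k Hk), (H2 k Hk). split; lra.
  - intros D H k Hk. destruct (refl_endpoints T D (2 * k + 1)) as [-> ->].
    destruct (H k Hk) as [-> ->]. split; ring.
  - intros D1 D2 H1 H2 k Hk. destruct (H1 k Hk), (H2 k Hk). split; lra.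
  - intros D HN Hs k Hk. destruct (symm_odd n T D k HT Hk Hs) as [_ HTT].
    destruct (HN k Hk). split; lra.
Qed.

Lemma reflection_D_M2 n T : 0 < T -> reflection_pair n T (BC_D n (2 * T)) (BC_M2 n T).
Proof.
  intros HT. split.
  - intros D1 D2 H1 H2 k Hk. destruct (H1 k Hk), (H2 k Hk). split; lra.
  - intros D H k Hk. destruct (refl_endpoints T D (2 * k)) as [-> ->].
    destruct (H k Hk) as [-> ->]. split; ring.
  - intros D1 D2 H1 H2 k Hk. destruct (H1 k Hk), (H2 k Hk). split; lra.
  - intros D HD Hs k Hk. destruct (symm_odd n T D k HT Hk Hs) as [_ HTT].
    destruct (HD k Hk). split; lra.
Qed.

Theorem corollary5p2 (n : nat) (T : R) (a : nat -> R -> R) :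
  (1 <= n)%nat -> 0 < T ->
  (forall k, (k < 2 * n)%nat -> L1 0 T (a k)) ->
  let N := (2 * n)%nat in
  let at_ := ext_coef T a in
  (forall GP GN,
     green_function N at_ 0 (2 * T) (BC_P n (2 * T)) GP ->
     green_function N a 0 T (BC_N n T) GN ->
     nonpos_on (2 * T) GP -> nonpos_on T GN) /\
  (forall GP GN,
     green_function N at_ 0 (2 * T) (BC_P n (2 * T)) GP ->
     green_function N a 0 T (BC_N n T) GN ->
     nonneg_on (2 * T) GP -> nonneg_on T GN) /\
  (forall G2 GN,
     green_function N at_ 0 (2 * T) (BC_N n (2 * T)) G2 ->
     green_function N a 0 T (BC_N n T) GN ->
     nonpos_on (2 * T) G2 -> nonpos_on T GN) /\
  (forall G2 GN,
     green_function N at_ 0 (2 * T) (BC_N n (2 * T)) G2 ->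
     green_function N a 0 T (BC_N n T) GN ->
     nonneg_on (2 * T) G2 -> nonneg_on T GN) /\
  (forall GD GM,
     green_function N at_ 0 (2 * T) (BC_D n (2 * T)) GD ->
     green_function N a 0 T (BC_M2 n T) GM ->
     nonpos_on (2 * T) GD -> nonpos_on T GM) /\
  (forall GD GM,
     green_function N at_ 0 (2 * T) (BC_D n (2 * T)) GD ->
     green_function N a 0 T (BC_M2 n T) GM ->
     nonneg_on (2 * T) GD -> nonneg_on T GM).
Proof.
  intros Hn HT _ N at_.
  pose proof (sign_transfer n T a _ _ Hn HT (reflection_P_N n T HT)) as HP.
  pose proof (sign_transfer n T a _ _ Hn HT (reflection_N_N n T HT)) as HN.
  pose proof (sign_transfer n T a _ _ Hn HT (reflection_D_M2 n T HT)) as HD.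
  split; [|split; [|split; [|split; [|split]]]]; intros G2 G1 H2 H1.
  - exact (proj1 (HP G2 G1 H2 H1)).
  - exact (proj2 (HP G2 G1 H2 H1)).
  - exact (proj1 (HN G2 G1 H2 H1)).
  - exact (proj2 (HN G2 G1 H2 H1)).
  - exact (proj1 (HD G2 G1 H2 H1)).
  - exact (proj2 (HD G2 G1 H2 H1)).
Qed.
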